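(* Let $m\le n$ and let $g:\mathbb{R}^n\to\mathbb{R}^m$ have components $g_i(x)=\frac12(A_ix,x)+(b_i,x)$, $i=1,\dots,m$, with symmetric $A_i\in\mathbb{R}^{n\times n}$ and $b_i\in\mathbb{R}^n$. Let $H\in\mathbb{R}^{m\times n}$ be the matrix with rows $b_i^T$, assume $H$ has rank $m$, and let $\mu_0>0$ be its smallest singular value. Let $L>0$ satisfy $\|g'(x)-g'(x')\|_2\le L\|x-x'\|_2$ for all $x,x'\in\mathbb{R}^n$. Then for every $y\in\mathbb{R}^m$ with $\|y\|_2<\frac{\mu_0^2}{4L}$ the equation $g(x)=y$ has a solution $x^*(y)$ with $\|x^*(y)\|_2\le\frac{\mu_0}{2L}$.
   Context: All norms are Euclidean; for matrices $\|\cdot\|_2$ is the spectral (operator) norm. $g'(x)$ is the $m\times n$ Jacobian with rows $(A_ix+b_i)^T$. *)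

From HB Require Import structures.
From mathcomp Require Import all_boot all_order all_algebra.
From mathcomp Require Import classical_sets reals.
Set Implicit Arguments. Unset Strict Implicit. Unset Printing Implicit Defensive.
Import Order.TTheory GRing.Theory Num.Theory.
Local Open Scope ring_scope.
Local Open Scope classical_set_scope.

Definition vnorm (R : realType) (k : nat) (v : 'cV[R]_k) : R :=
  Num.sqrt (\sum_(i < k) v i 0 ^+ 2).

Definition spnorm (R : realType) (p q : nat) (M : 'M[R]_(p, q)) : R :=
  sup [set r | exists v : 'cV[R]_q, vnorm v <= 1 /\ r = vnorm (M *m v)].

Definition quadmap (R : realType) (m n : nat)
  (A : 'I_m -> 'M[R]_n) (b : 'I_m -> 'cV[R]_n) (x : 'cV[R]_n) : 'cV[R]_m :=
  \col_(i < m) ((2%:R)^-1 * (x^T *m A i *m x) 0 0 + ((b i)^T *m x) 0 0).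

Definition quadjac (R : realType) (m n : nat)
  (A : 'I_m -> 'M[R]_n) (b : 'I_m -> 'cV[R]_n) (x : 'cV[R]_n) : 'M[R]_(m, n) :=
  \matrix_(i < m, j < n) ((A i *m x + b i) j 0).

Definition linpart (R : realType) (m n : nat) (b : 'I_m -> 'cV[R]_n) : 'M[R]_(m, n) :=
  \matrix_(i < m, j < n) (b i j 0).

(* mu is the smallest singular value of H : 'M_(m,n) with m <= n:
   the singular values are the nonnegative square roots of the eigenvalues
   of H H^T, and mu is the smallest one. *)
Definition smallest_singular_value (R : realType) (m n : nat)
  (H : 'M[R]_(m, n)) (mu : R) : Prop :=
  0 <= mu /\ eigenvalue (H *m H^T) (mu ^+ 2) /\
  forall a : R, eigenvalue (H *m H^T) a -> mu ^+ 2 <= a.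

From HB Require Import structures.
From mathcomp Require Import all_boot all_order all_algebra.
From mathcomp Require Import classical_sets functions reals topology normedtype sequences.
From mathcomp Require Import ring lra.
Import Order.TTheory GRing.Theory Num.Theory numFieldNormedType.Exports.
Set Implicit Arguments. Unset Strict Implicit. Unset Printing Implicit Defensive.
Local Open Scope ring_scope.
Local Open Scope classical_set_scope.

(** Since the spectrum of H H^T is
    bounded below by mu0^2, P := H^T (H H^T)^-1 is a right inverse of H with
    mu0 |P z| <= |z|. As g is quadratic, g u - g v = g'((u + v)/2) (u - v)
    exactly, so the Lipschitz bound on g' gives
    |g u - g v - H (u - v)| <= L/2 (|u| + |v|) |u - v|.  Hence
    T z := z + y - g (P z) maps the ball of radius mu0^2/(2L) into itself and
    halves distances there; its fixed point z yields the solution x := P z. *)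

Section EuclideanGeometry.
Variable R : realType.
Implicit Types (k : nat) (a t : R).

Definition dot k (u v : 'cV[R]_k) : R := (u^T *m v) 0 0.

Lemma dotE k (u v : 'cV[R]_k) : dot u v = \sum_i u i 0 * v i 0.
Proof. by rewrite /dot mxE; apply: eq_bigr => i _; rewrite mxE. Qed.

Lemma dotC k (u v : 'cV[R]_k) : dot u v = dot v u.
Proof. by rewrite !dotE; apply: eq_bigr => i _; rewrite mulrC. Qed.

Lemma dotDr k (u v w : 'cV[R]_k) : dot u (v + w) = dot u v + dot u w.
Proof. by rewrite /dot mulmxDr mxE. Qed.

Lemma dotZr k a (u v : 'cV[R]_k) : dot u (a *: v) = a * dot u v.
Proof. by rewrite /dot -scalemxAr mxE. Qed.

Lemma dotNr k (u v : 'cV[R]_k) : dot u (- v) = - dot u v.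
Proof. by rewrite /dot mulmxN mxE. Qed.

Lemma dotBr k (u v w : 'cV[R]_k) : dot u (v - w) = dot u v - dot u w.
Proof. by rewrite dotDr dotNr. Qed.

Lemma dotDl k (u v w : 'cV[R]_k) : dot (v + w) u = dot v u + dot w u.
Proof. by rewrite dotC dotDr -!(dotC u). Qed.

Lemma dotZl k a (u v : 'cV[R]_k) : dot (a *: v) u = a * dot v u.
Proof. by rewrite dotC dotZr dotC. Qed.

Lemma dotNl k (u v : 'cV[R]_k) : dot (- v) u = - dot v u.
Proof. by rewrite dotC dotNr dotC. Qed.

Lemma dot0r k (u : 'cV[R]_k) : dot u 0 = 0.
Proof. by rewrite /dot mulmx0 mxE. Qed.

Lemma dot_ge0 k (u : 'cV[R]_k) : 0 <= dot u u.
Proof. by rewrite dotE sumr_ge0 // => i _; rewrite -expr2 sqr_ge0. Qed.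

Lemma dot_eq0 k (u : 'cV[R]_k) : dot u u = 0 -> u = 0.
Proof.
rewrite dotE => /eqP; rewrite psumr_eq0 => [/allP u0|i _]; last by rewrite -expr2 sqr_ge0.
apply/matrixP => i j; rewrite ord1 mxE.
by have := u0 i (mem_index_enum _); rewrite /= mulf_eq0 orbb => /eqP.
Qed.

Lemma dot_mulmx_sym k (P : 'M[R]_k) (u v : 'cV[R]_k) :
  P^T = P -> dot (P *m u) v = dot u (P *m v).
Proof. by move=> P_sym; rewrite /dot trmx_mul P_sym mulmxA. Qed.

Lemma quadratic_ge0_discr (a b c : R) : 0 <= c ->
  (forall t, 0 <= a + 2 * t * b + t ^+ 2 * c) -> b ^+ 2 <= a * c.
Proof.
move=> c_ge0 quad_ge0; have a_ge0 := quad_ge0 0.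
rewrite !(mulr0, mul0r, expr0n, addr0) in a_ge0.
have [c_gt0|] := ltP 0 c.
  have := quad_ge0 (- b / c); have : - b / c * c = - b by rewrite divfK ?gt_eqF.
  nra.
rewrite le_eqVlt ltNge c_ge0 orbF => /eqP c0; subst c.
have [->|b_neq0] := eqVneq b 0; first by rewrite expr0n mulr0.
have := quad_ge0 (- (a + 1) / (2 * b)).
have : 2 * (- (a + 1) / (2 * b)) * b = - (a + 1) by field; rewrite b_neq0.
nra.
Qed.

Lemma psd_form_CauchySchwarz k (P : 'M[R]_k) (u v : 'cV[R]_k) : P^T = P ->
  (forall z, 0 <= dot z (P *m z)) ->
  dot u (P *m v) ^+ 2 <= dot u (P *m u) * dot v (P *m v).
Proof.
move=> P_sym P_psd; apply: quadratic_ge0_discr; first exact: P_psd.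
move=> t; have := P_psd (u + t *: v).
rewrite mulmxDr -scalemxAr !dotDr !dotDl !dotZr !dotZl.
rewrite (dotC v (P *m u)) dot_mulmx_sym //; lra.
Qed.

Lemma dot_CauchySchwarz k (u v : 'cV[R]_k) : dot u v ^+ 2 <= dot u u * dot v v.
Proof.
have := @psd_form_CauchySchwarz k 1%:M u v; rewrite !mul1mx; apply.
  exact: tr_scalar_mx.
by move=> z; rewrite mul1mx dot_ge0.
Qed.

Lemma vnormE k (u : 'cV[R]_k) : vnorm u = Num.sqrt (dot u u).
Proof. by rewrite /vnorm dotE; congr Num.sqrt; apply: eq_bigr => i _; rewrite expr2. Qed.

Lemma vnorm_ge0 k (u : 'cV[R]_k) : 0 <= vnorm u.
Proof. by rewrite vnormE sqrtr_ge0. Qed.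

Lemma vnorm_sqr k (u : 'cV[R]_k) : vnorm u ^+ 2 = dot u u.
Proof. by rewrite vnormE sqr_sqrtr // dot_ge0. Qed.

Lemma vnorm_eq0 k (u : 'cV[R]_k) : vnorm u = 0 -> u = 0.
Proof. by move=> u0; apply: dot_eq0; rewrite -vnorm_sqr u0 expr0n. Qed.

Lemma vnorm0 k : vnorm (0 : 'cV[R]_k) = 0.
Proof. by rewrite vnormE dot0r sqrtr0. Qed.

Lemma dot_le_vnorm k (u v : 'cV[R]_k) : dot u v <= vnorm u * vnorm v.
Proof.
rewrite !vnormE -sqrtrM ?dot_ge0 //; apply: le_trans (ler_norm _) _.
by rewrite -sqrtr_sqr ler_wsqrtr // dot_CauchySchwarz.
Qed.

Lemma ler_vnormD k (u v : 'cV[R]_k) : vnorm (u + v) <= vnorm u + vnorm v.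
Proof.
rewrite {1}vnormE -[vnorm u + vnorm v]ger0_norm ?addr_ge0 ?vnorm_ge0 //.
rewrite -sqrtr_sqr ler_wsqrtr // dotDl !dotDr sqrrD !vnorm_sqr (dotC v u).
have := dot_le_vnorm u v; lra.
Qed.

Lemma vnormZ k a (u : 'cV[R]_k) : vnorm (a *: u) = `|a| * vnorm u.
Proof. by rewrite !vnormE dotZl dotZr mulrA -expr2 sqrtrM ?sqr_ge0 // sqrtr_sqr. Qed.

Lemma vnormN k (u : 'cV[R]_k) : vnorm (- u) = vnorm u.
Proof. by rewrite -scaleN1r vnormZ normrN normr1 mul1r. Qed.

Lemma vnorm_distC k (u v : 'cV[R]_k) : vnorm (u - v) = vnorm (v - u).
Proof. by rewrite -vnormN opprB. Qed.

End EuclideanGeometry.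

Section OperatorBounds.
Variable R : realType.

Definition frobnorm p q (N : 'M[R]_(p, q)) : R := Num.sqrt (\sum_i \sum_j N i j ^+ 2).

Lemma frobnorm_ge0 p q (N : 'M[R]_(p, q)) : 0 <= frobnorm N.
Proof. exact: sqrtr_ge0. Qed.

Lemma vnorm_mulmx_le_frobnorm p q (N : 'M[R]_(p, q)) (v : 'cV[R]_q) :
  vnorm (N *m v) <= frobnorm N * vnorm v.
Proof.
rewrite !vnormE /frobnorm -sqrtrM; last first.
  by rewrite sumr_ge0 // => i _; rewrite sumr_ge0 // => j _; rewrite sqr_ge0.
apply: ler_wsqrtr; rewrite [dot (N *m v) _]dotE mulr_suml; apply: ler_sum => i _.
pose r : 'cV[R]_q := (row i N)^T.
have -> : (N *m v) i 0 = dot r v by rewrite dotE mxE; apply: eq_bigr => j _; rewrite !mxE.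
have -> : \sum_j N i j ^+ 2 = dot r r by rewrite dotE; apply: eq_bigr => j _; rewrite !mxE expr2.
by rewrite -expr2 dot_CauchySchwarz.
Qed.

Lemma vnorm_mulmx_le_spnorm p q (N : 'M[R]_(p, q)) (v : 'cV[R]_q) :
  vnorm (N *m v) <= spnorm N * vnorm v.
Proof.
have N_ub : has_ubound [set r | exists v : 'cV[R]_q, vnorm v <= 1 /\ r = vnorm (N *m v)].
  exists (frobnorm N) => _ [w [w_le1 ->]].
  apply: le_trans (vnorm_mulmx_le_frobnorm N w) _.
  by rewrite -[leRHS]mulr1 ler_wpM2l ?frobnorm_ge0.
have [v0|v_neq0] := eqVneq (vnorm v) 0.
  by rewrite v0 mulr0 (vnorm_eq0 v0) mulmx0 vnorm0.
have v_gt0 : 0 < vnorm v by rewrite lt_def v_neq0 vnorm_ge0.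
have vnormV : vnorm ((vnorm v)^-1 *: v) = 1.
  by rewrite vnormZ ger0_norm ?invr_ge0 ?vnorm_ge0 // mulVf.
have /(ub_le_sup N_ub) : exists w : 'cV[R]_q, vnorm w <= 1 /\
    vnorm (N *m ((vnorm v)^-1 *: v)) = vnorm (N *m w).
  by exists ((vnorm v)^-1 *: v); rewrite vnormV.
by rewrite -scalemxAr vnormZ ger0_norm ?invr_ge0 ?vnorm_ge0 // ler_pdivrMl // mulrC.
Qed.

Lemma dot_mulmx_ge_frobnorm k (M : 'M[R]_k) (z : 'cV[R]_k) :
  - frobnorm M * dot z z <= dot z (M *m z).
Proof.
have := dot_le_vnorm (- z) (M *m z); rewrite dotNl vnormN -vnorm_sqr.
have := vnorm_mulmx_le_frobnorm M z; have := vnorm_ge0 z; nra.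
Qed.

Lemma psd_unitmx_coercive k (P : 'M[R]_k) : P^T = P ->
  (forall z, 0 <= dot z (P *m z)) -> P \in unitmx ->
  exists2 K, 0 < K & forall w, dot w w <= K * dot w (P *m w).
Proof.
move=> P_sym P_psd P_unit; set K := frobnorm (invmx P) + 1.
have K_gt0 : 0 < K by rewrite ltr_wpDl ?frobnorm_ge0.
exists K => // w; set u := invmx P *m w.
have Pu : P *m u = w by rewrite /u mulKVmx.
have uw_sqr : dot w w ^+ 2 <= dot u w * dot w (P *m w).
  have := psd_form_CauchySchwarz u w P_sym P_psd.
  by rewrite Pu -(dot_mulmx_sym u w P_sym) Pu.
have uw_le : dot u w <= K * dot w w.
  apply: le_trans (dot_le_vnorm u w) _.
  apply: le_trans (_ : frobnorm (invmx P) * vnorm w * vnorm w <= _).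
    by rewrite ler_wpM2r ?vnorm_ge0 // vnorm_mulmx_le_frobnorm.
  by rewrite -mulrA -expr2 vnorm_sqr ler_wpM2r ?dot_ge0 // lerDl.
have [w0|w_neq0] := eqVneq (dot w w) 0; first by rewrite w0 pmulr_rge0.
have w_gt0 : 0 < dot w w by rewrite lt_def w_neq0 dot_ge0.
have := P_psd w; have := dot_ge0 u; nra.
Qed.

Lemma not_eigenvalue_unitmx k (M : 'M[R]_k) a : ~~ eigenvalue M a -> M - a%:M \in unitmx.
Proof. by move/negbNE; rewrite -row_free_unit -kermx_eq0. Qed.

Section SymmetricLowerBound.
Variables (k : nat) (M : 'M[R]_k.+1).
Hypothesis M_sym : M^T = M.

Let S := [set t | forall z, t * dot z z <= dot z (M *m z)].

Let S_ub : has_ubound S.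
Proof.
pose e : 'cV[R]_k.+1 := delta_mx 0 0.
have ee : dot e e = 1.
  rewrite dotE (bigD1 0) //= big1 ?addr0; first by rewrite !mxE eqxx mulr1.
  by move=> i /negbTE i0; rewrite !mxE i0 mul0r.
by exists (dot e (M *m e)) => t /(_ e); rewrite ee mulr1.
Qed.

Let S_sup : S (sup S).
Proof.
have S_ne : S !=set0 by exists (- frobnorm M) => z; apply: dot_mulmx_ge_frobnorm.
move=> w; rewrite leNgt; apply/negP => w_lt.
have [w0|w_neq0] := eqVneq (dot w w) 0.
  by move: w_lt; rewrite (dot_eq0 w0) mulmx0 !dot0r mulr0 ltxx.
have w_gt0 : 0 < dot w w by rewrite lt_def w_neq0 dot_ge0.
have /(sup_gt S_ne) [t St] : dot w (M *m w) / dot w w < sup S by rewrite ltr_pdivrMr.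
by rewrite ltr_pdivrMr // ltNge St.
Qed.

(* Were [M - sup S] invertible, it would be coercive and [sup S] could be raised. *)
Let sup_eigenvalue : eigenvalue M (sup S).
Proof.
apply: contraT => /not_eigenvalue_unitmx P_unit.
set P := M - (sup S)%:M in P_unit.
have dotP w : dot w (P *m w) = dot w (M *m w) - sup S * dot w w.
  by rewrite /P mulmxBl mul_scalar_mx dotBr dotZr.
have P_sym : P^T = P by rewrite /P linearB /= tr_scalar_mx M_sym.
have P_psd w : 0 <= dot w (P *m w) by rewrite dotP subr_ge0 S_sup.
have [K K_gt0 P_coercive] := psd_unitmx_coercive P_sym P_psd P_unit.
have : S (sup S + K^-1).
  move=> w; have := P_coercive w; rewrite dotP -ler_pdivrMl // mulrC; lra.
by move/(ub_le_sup S_ub); rewrite gerDl leNgt invr_gt0 K_gt0.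
Qed.

Lemma sym_eigenvalue_lower_boundS c :
  (forall a, eigenvalue M a -> c <= a) -> forall z, c * dot z z <= dot z (M *m z).
Proof.
move=> M_eig z; apply: le_trans (S_sup z).
by rewrite ler_wpM2r ?dot_ge0 ?M_eig.
Qed.

End SymmetricLowerBound.

Lemma sym_eigenvalue_lower_bound k (M : 'M[R]_k) c : M^T = M ->
  (forall a, eigenvalue M a -> c <= a) -> forall z, c * dot z z <= dot z (M *m z).
Proof.
case: k M => [M _ _ z|k M]; last by move=> /sym_eigenvalue_lower_boundS; apply.
by rewrite !dotE !big_ord0 mulr0.
Qed.

End OperatorBounds.

Section RightInverse.
Variable R : realType.

Lemma smallest_singular_value_right_inverse m n (H : 'M[R]_(m, n)) mu :
  0 < mu -> smallest_singular_value H mu ->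
  exists2 P : 'M[R]_(n, m), H *m P = 1%:M & forall z, mu * vnorm (P *m z) <= vnorm z.
Proof.
move=> mu_gt0 [_ [_ mu_min]]; set M := H *m H^T.
have M_sym : M^T = M by rewrite /M trmx_mul trmxK.
have dotM z : dot z (M *m z) = vnorm (H^T *m z) ^+ 2.
  by rewrite vnorm_sqr /M /dot trmx_mul trmxK !mulmxA.
have M_lower := sym_eigenvalue_lower_bound M_sym mu_min.
have M_unit : M \in unitmx.
  have /not_eigenvalue_unitmx : ~~ eigenvalue M 0.
    by apply/negP => /mu_min; rewrite leNgt exprn_gt0.
  by rewrite raddf0 subr0.
exists (H^T *m invmx M) => [|z]; first by rewrite mulmxA mulmxV.
set w := invmx M *m z; have Mw : M *m w = z by rewrite mulKVmx.
have Pz_sqr : vnorm (H^T *m invmx M *m z) ^+ 2 = dot w z by rewrite -mulmxA -dotM Mw.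
have w_lower : mu ^+ 2 * vnorm w ^+ 2 <= dot w z by have := M_lower w; rewrite Mw vnorm_sqr.
have w_upper := dot_le_vnorm w z.
have w_ge0 := vnorm_ge0 w; have z_ge0 := vnorm_ge0 z.
have Pz_ge0 := vnorm_ge0 (H^T *m invmx M *m z).
have mu_w : mu ^+ 2 * vnorm w <= vnorm z.
  have [->|w_neq0] := eqVneq (vnorm w) 0; first by rewrite mulr0.
  have w_gt0 : 0 < vnorm w by rewrite lt_def w_neq0.
  nra.
nra.
Qed.

End RightInverse.

(* Banach's theorem needs ['M[R]_(m, n)] as a complete normed module; the
   library provides both structures but does not declare their join. *)
HB.instance Definition _ (R : realType) (m n : nat) :=
  Complete.copy 'M[R]_(m, n) 'M[R]_(m, n).

Section EuclideanContraction.
Variables (R : realType) (k : nat).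
Implicit Types (u v z w : 'cV[R]_k).

Lemma normr_le_vnorm v : `|v| <= vnorm v.
Proof.
rewrite [leLHS]/Num.Def.normr /= mx_normrE; apply: bigmax_le; first exact: vnorm_ge0.
move=> [i j] _ /=; rewrite ord1 vnormE -sqrtr_sqr ler_wsqrtr // dotE (bigD1 i) //=.
by rewrite -expr2 lerDl sumr_ge0 // => l _; rewrite -expr2 sqr_ge0.
Qed.

Lemma vnorm_le_normr v : vnorm v <= k%:R * `|v|.
Proof.
have entry_le i : `|v i 0| <= `|v|.
  rewrite [leRHS]/Num.Def.normr /= mx_normrE.
  exact: (le_bigmax _ (fun ij : 'I_k * 'I_1 => `|v ij.1 ij.2|) (i, 0)).
rewrite vnormE -[leRHS]ger0_norm ?mulr_ge0 ?ler0n // -sqrtr_sqr ler_wsqrtr //.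
apply: le_trans (_ : \sum_(i < k) `|v| ^+ 2 <= _).
  rewrite dotE; apply: ler_sum => i _; rewrite -expr2 -real_normK ?num_real //.
  by rewrite lerXn2r ?nnegrE.
rewrite sumr_const card_ord -[`|v| ^+ 2 *+ k]mulr_natl exprMn ler_wpM2r ?exprn_ge0 //.
by rewrite expr2 -natrM ler_nat; case: k {v entry_le} => // n; rewrite leq_pmulr.
Qed.

Lemma vnorm_continuous : continuous (@vnorm R k).
Proof.
move=> x; apply/(@cvgrPdist_lt _ _ _ (nbhs x) (@nbhs_filter _ x)) => e e_gt0.
have k1_gt0 : 0 < k%:R + 1 :> R by rewrite ltr_wpDl ?ler0n.
near=> y.
have vnorm_dist : `|vnorm x - vnorm y| <= vnorm (x - y).
  rewrite ler_norml; apply/andP; split.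
    by have := ler_vnormD (y - x) x; rewrite subrK vnorm_distC; lra.
  by have := ler_vnormD (x - y) y; rewrite subrK; lra.
apply: le_lt_trans vnorm_dist _; apply: le_lt_trans (vnorm_le_normr _) _.
apply: le_lt_trans (_ : (k%:R + 1) * `|x - y| < _).
  by rewrite ler_wpM2r ?normr_ge0 // lerDl.
rewrite mulrC -ltr_pdivlMr //; near: y.
by apply: cvgr_dist_lt; rewrite ?divr_gt0.
Unshelve. all: by end_near.
Qed.

Lemma closed_vnorm_le (r : R) : closed [set z : 'cV[R]_k | vnorm z <= r].
Proof.
rewrite -[X in closed X]/(@vnorm R k @^-1` [set t | t <= r]).
apply: preimage_closed; last exact: closed_le.
by move=> z _; exact: vnorm_continuous.
Qed.

(* The canonical norm of ['cV_k] is the max norm, within a factor [k] of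
   [vnorm]: some iterate of a [vnorm]-contraction is a contraction for it. *)
Lemma vnorm_contraction_fixed_point (U : set 'cV[R]_k) f (q : R) :
  closed U -> U !=set0 -> (forall z, U z -> U (f z)) -> 0 <= q < 1 ->
  (forall z w, U z -> U w -> vnorm (f z - f w) <= q * vnorm (z - w)) ->
  exists2 p, U p & f p = p.
Proof.
move=> U_closed U_ne fU /andP[q_ge0 q_lt1] f_contr.
have iterU j z : U z -> U (iter j f z) by elim: j => //= j IH /IH/fU.
have iter_contr j z w : U z -> U w ->
    vnorm (iter j f z - iter j f w) <= q ^+ j * vnorm (z - w).
  elim: j => [|j IH] Uz Uw /=; first by rewrite mul1r.
  apply: le_trans (f_contr _ _ (iterU _ _ Uz) (iterU _ _ Uw)) _.
  by rewrite exprS -mulrA ler_wpM2l // IH.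
have [j kqj_lt1] : exists j, k%:R * q ^+ j < 1.
  have k1_gt0 : 0 < k%:R + 1 :> R by rewrite ltr_wpDl ?ler0n.
  have k1V_gt0 : 0 < (k%:R + 1)^-1 :> R by rewrite invr_gt0.
  have q_norm_lt1 : `|q| < 1 by rewrite ger0_norm.
  have /cvgr0_norm_lt/(_ _ k1V_gt0) [N _ /(_ N (leqnn N)) /=] := cvg_expr q_norm_lt1.
  rewrite ger0_norm ?exprn_ge0 // -(ltr_pM2l k1_gt0) mulrV ?unitfE ?gt_eqF // => qN_lt.
  by exists N; apply: le_lt_trans qN_lt; rewrite ler_wpM2r ?exprn_ge0 // lerDl.
have fjU : {homo iter j f : z / U z >-> U z} := iterU j.
have kqj_ge0 : 0 <= k%:R * q ^+ j by rewrite mulr_ge0 ?exprn_ge0.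
have fj_contr : is_contraction (mkfun fjU).
  exists (interval_inference.NngNum kqj_ge0); split => //= -[z w] [/= Uz Uw].
  apply: le_trans (normr_le_vnorm _) _; apply: le_trans (iter_contr j z w Uz Uw) _.
  by rewrite [k%:R * _]mulrC -mulrA ler_wpM2l ?exprn_ge0 // vnorm_le_normr.
have [p Up p_fix] := banach_fixed_point fj_contr U_closed U_ne.
exists p => //; apply/esym/(contraction_fixpoint_unique fj_contr Up (fU _ Up) p_fix).
by change (f p = iter j f (f p)); rewrite -iterSr iterS -p_fix.
Qed.

End EuclideanContraction.

Section RightInverseSolvability.
Variables (R : realType) (m n : nat) (g : 'cV[R]_n -> 'cV[R]_m).
Variables (H : 'M[R]_(m, n)) (P : 'M[R]_(n, m)) (mu L : R).
Hypotheses (mu_gt0 : 0 < mu) (L_gt0 : 0 < L) (HP : H *m P = 1%:M).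
Hypothesis P_bound : forall z, mu * vnorm (P *m z) <= vnorm z.
Hypothesis g0 : g 0 = 0.
Hypothesis g_remainder : forall u v,
  vnorm (g u - g v - H *m (u - v)) <= L / 2 * (vnorm u + vnorm v) * vnorm (u - v).
Variable y : 'cV[R]_m.
Hypothesis y_small : vnorm y < mu ^+ 2 / (4 * L).

Let rho := mu / (2 * L).
Let r := mu * rho.
Let T z := z + y - g (P *m z).

Let mu_L_rho : mu = 2 * L * rho. Proof. by rewrite /rho; field; rewrite gt_eqF. Qed.

Let P_ball z : vnorm z <= r -> vnorm (P *m z) <= rho.
Proof. by move=> z_le; rewrite -(ler_pM2l mu_gt0) (le_trans (P_bound z)). Qed.

(* [H P = 1] makes [T z - T w] the remainder of [g] between [P w] and [P z]. *)
Let T_dist z w : vnorm (T z - T w) <=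
  L / 2 * (vnorm (P *m z) + vnorm (P *m w)) * vnorm (P *m z - P *m w).
Proof.
have -> : T z - T w = - (g (P *m z) - g (P *m w) - H *m (P *m z - P *m w)).
  by rewrite mulmxBr !mulmxA HP !mul1mx /T; apply/matrixP => i j; rewrite !mxE; ring.
by rewrite vnormN g_remainder.
Qed.

Let T_ball z : vnorm z <= r -> vnorm (T z) <= r.
Proof.
move=> z_le; have := T_dist z 0; rewrite mulmx0 vnorm0 addr0 subr0.
have -> : T z - T 0 = T z - y by rewrite /T mulmx0 g0 !subr0 add0r.
have := ler_vnormD (T z - y) y; rewrite subrK.
have y_lt : vnorm y < r / 2.
  by move: y_small; rewrite /r /rho; congr (_ < _); field; rewrite gt_eqF.
have Pz_le : L / 2 * vnorm (P *m z) * vnorm (P *m z) <= r / 4.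
  have Pz_sqr : vnorm (P *m z) * vnorm (P *m z) <= rho * rho.
    by have := P_ball z_le; have := vnorm_ge0 (P *m z); nra.
  have : L / 2 * (rho * rho) = r / 4 by rewrite /r mu_L_rho; field.
  have := ler_wpM2l (ltW (divr_gt0 L_gt0 (ltr0Sn _ 1))) Pz_sqr; lra.
have := vnorm_ge0 y; lra.
Qed.

Let T_contract z w : vnorm z <= r -> vnorm w <= r ->
  vnorm (T z - T w) <= 2^-1 * vnorm (z - w).
Proof.
move=> z_le w_le; apply: le_trans (T_dist z w) _.
set t := vnorm (P *m z - P *m w).
have t_le : mu * t <= vnorm (z - w) by rewrite /t -mulmxBr P_bound.
have sum_le : (vnorm (P *m z) + vnorm (P *m w)) * t <= 2 * rho * t.
  by rewrite ler_wpM2r ?vnorm_ge0 //; have := P_ball z_le; have := P_ball w_le; lra.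
have := ler_wpM2l (ltW (divr_gt0 L_gt0 (ltr0Sn _ 1))) sum_le.
rewrite mu_L_rho in t_le; rewrite -mulrA; lra.
Qed.

Lemma right_inverse_solution : exists x, g x = y /\ vnorm x <= mu / (2 * L).
Proof.
have rho_gt0 : 0 < rho by rewrite divr_gt0 ?mulr_gt0.
have ball_ne : [set z : 'cV[R]_m | vnorm z <= r] !=set0.
  by exists 0; rewrite /= vnorm0 /r mulr_ge0 // ltW.
have half_lt1 : 0 <= (2^-1 : R) < 1 by apply/andP; split; lra.
have [p p_le Tp] := vnorm_contraction_fixed_point (@closed_vnorm_le R m r) ball_ne
  T_ball half_lt1 T_contract.
exists (P *m p); split; last exact: P_ball.
by move/eqP: Tp; rewrite /T subr_eq eq_sym => /eqP/addrI.
Qed.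

End RightInverseSolvability.

Section QuadraticMap.
Variables (R : realType) (m n : nat) (A : 'I_m -> 'M[R]_n) (b : 'I_m -> 'cV[R]_n).

Lemma quadmapE x i : quadmap A b x i 0 = 2^-1 * dot x (A i *m x) + dot (b i) x.
Proof. by rewrite mxE /dot mulmxA. Qed.

Lemma quadjac_mulmxE x w i : (quadjac A b x *m w) i 0 = dot (A i *m x + b i) w.
Proof. by rewrite dotE mxE; apply: eq_bigr => j _; rewrite mxE. Qed.

Lemma quadmap0 : quadmap A b 0 = 0.
Proof. by apply/matrixP => i j; rewrite ord1 quadmapE mxE mulmx0 !dot0r mulr0 addr0. Qed.

Lemma quadjac0 : quadjac A b 0 = linpart b.
Proof. by apply/matrixP => i j; rewrite mxE mulmx0 add0r mxE. Qed.

Hypothesis A_sym : forall i, (A i)^T = A i.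

Lemma quadmap_midpoint u v :
  quadmap A b u - quadmap A b v = quadjac A b (2^-1 *: (u + v)) *m (u - v).
Proof.
apply/matrixP => i j; rewrite ord1 quadjac_mulmxE mxE [in X in _ + X]mxE !quadmapE.
rewrite -scalemxAr mulmxDr dotDl dotZl dotDl !dotBr.
rewrite (dotC (A i *m u) u) (dotC (A i *m v) v) (dotC (A i *m v) u) dot_mulmx_sym //.
ring.
Qed.

Lemma quadmap_remainder_le L : 0 <= L ->
  (forall x x', spnorm (quadjac A b x - quadjac A b x') <= L * vnorm (x - x')) ->
  forall u v, vnorm (quadmap A b u - quadmap A b v - linpart b *m (u - v)) <=
    L / 2 * (vnorm u + vnorm v) * vnorm (u - v).
Proof.
move=> L_ge0 jac_lipschitz u v.
rewrite quadmap_midpoint -quadjac0 -mulmxBl.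
apply: le_trans (vnorm_mulmx_le_spnorm _ _) _; rewrite ler_wpM2r ?vnorm_ge0 //.
apply: le_trans (jac_lipschitz _ _) _.
rewrite subr0 vnormZ ger0_norm ?invr_ge0 ?ler0n // mulrA ler_wpM2l ?divr_ge0 //.
exact: ler_vnormD.
Qed.

End QuadraticMap.

Theorem theorem5 (R : realType) (m n : nat)
  (A : 'I_m -> 'M[R]_n) (b : 'I_m -> 'cV[R]_n)
  (mu0 L : R) :
  (m <= n)%N ->
  (forall i, (A i)^T = A i) ->
  \rank (linpart b) = m ->
  0 < mu0 ->
  smallest_singular_value (linpart b) mu0 ->
  0 < L ->
  (forall x x' : 'cV[R]_n,
      spnorm (quadjac A b x - quadjac A b x') <= L * vnorm (x - x')) ->
  forall y : 'cV[R]_m, vnorm y < mu0 ^+ 2 / (4%:R * L) ->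
  exists x : 'cV[R]_n, quadmap A b x = y /\ vnorm x <= mu0 / (2%:R * L).
Proof.
move=> _ A_sym _ mu0_gt0 mu0_ssv L_gt0 jac_lipschitz y y_small.
have [P HP P_bound] := smallest_singular_value_right_inverse mu0_gt0 mu0_ssv.
apply: (right_inverse_solution mu0_gt0 L_gt0 HP P_bound _ _ y_small).
  exact: quadmap0.
by move=> u v; apply: quadmap_remainder_le => //; exact: ltW.
Qed.
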